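(* Let $k$ be a positive integer. Suppose that $h:\mathbb{H}\to\mathbb{C}$ is holomorphic, $M\in\mathrm{SL}_2(\mathbb{R})$ is elliptic of infinite order, and $\zeta\in\mathbb{C}^\times$ is a root of unity such that $h|M=\zeta h$. Then $h=0$.
   Context: $\mathbb{H}$ is the upper half-plane. For $\gamma=\begin{pmatrix}a&b\\c&d\end{pmatrix}\in\mathrm{GL}_2^+(\mathbb{R})$, $h|\gamma(z)=(\det\gamma)^{k/2}(cz+d)^{-k}h\big(\frac{az+b}{cz+d}\big)$. *)

From Stdlib Require Import Reals.
From Coquelicot Require Import Coquelicot.

Record mat2 : Type := Mat2 { ma : R; mb : R; mc : R; md : R }.

Definition mat2_det (g : mat2) : R := (ma g * md g - mb g * mc g)%R.
Definition mat2_tr (g : mat2) : R := (ma g + md g)%R.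
Definition mat2_id : mat2 := Mat2 1 0 0 1.
Definition mat2_mul (g h : mat2) : mat2 :=
  Mat2 (ma g * ma h + mb g * mc h)%R (ma g * mb h + mb g * md h)%R
       (mc g * ma h + md g * mc h)%R (mc g * mb h + md g * md h)%R.
Fixpoint mat2_pow (g : mat2) (n : nat) : mat2 :=
  match n with O => mat2_id | S n => mat2_mul g (mat2_pow g n) end.

Definition in_SL2R (g : mat2) : Prop := mat2_det g = 1%R.
Definition elliptic (g : mat2) : Prop := (Rabs (mat2_tr g) < 2)%R.
Definition infinite_order (g : mat2) : Prop :=
  forall n : nat, (0 < n)%nat -> mat2_pow g n <> mat2_id.

Definition in_H (z : C) : Prop := (0 < Im z)%R.

Definition holomorphic_on_H (h : C -> C) : Prop :=
  forall z : C, in_H z -> @ex_derive C_AbsRing C_NormedModule h z.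

Definition mobius (g : mat2) (z : C) : C :=
  Cdiv (Cplus (Cmult (RtoC (ma g)) z) (RtoC (mb g)))
       (Cplus (Cmult (RtoC (mc g)) z) (RtoC (md g))).

Definition slash (k : nat) (h : C -> C) (g : mat2) (z : C) : C :=
  Cmult (Cmult (RtoC (Rpower (mat2_det g) (INR k / 2)))
               (Cinv (pow_n (Cplus (Cmult (RtoC (mc g)) z) (RtoC (md g))) k)))
        (h (mobius g z)).

Definition root_of_unity (zeta : C) : Prop :=
  exists n : nat, (0 < n)%nat /\ pow_n zeta n = RtoC 1.

From Stdlib Require Import Reals Lra Lia Psatz ZArith Classical.
From Coquelicot Require Import Coquelicot.

(* Let [z0] be the fixed point of [M] in H and [rho = c conj(z0) + d], a complex number of modulus
   one which is not a root of unity because [M] has infinite order. In the disk coordinate [w] of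
   the Cayley map [w |-> (z0 - conj(z0) w) / (1 - w)], [M] acts as [w |-> rho^2 w], and
   [F(w) = (1 - w)^(-k) h(cayley w)] satisfies [F(rho^2 w) = zeta conj(rho)^k F(w)]. Iterating
   [N] times, where [zeta^N = 1], gives [F(s w) = mu F(w)] with [s = rho^(2N)] of infinite order
   and [mu = conj(rho)^(kN)], which is not a power of [s] because [k > 0].
   Such an [F] vanishes: on power series, [a_n s^n = mu a_n] kills every coefficient. Without
   power series, one uses that the powers of [s] accumulate at 1: comparing first-order expansions
   of [F] along such rotations yields an Euler equation [w F'(w) = L F(w)] once [F] has a nonzero
   value. Then [F(e^(it) w) e^(-iLt)] is constant, so [L] is an integer [m] with [mu = s^m],
   impossible for [m >= 0]; for [m < 0] the constant [F(r w) r^(-m)] tends to 0 as [r -> 0]. *)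

Open Scope R_scope.

Lemma pow_n_Cpow (z : C) (n : nat) : pow_n z n = (z ^ n)%C.
Proof.
  induction n as [|n IH]; [reflexivity|].
  change (pow_n z (S n)) with (z * pow_n z n)%C. now rewrite IH.
Qed.

Lemma Cmult_reg_l (a b c : C) : c <> 0 -> (c * a)%C = (c * b)%C -> a = b.
Proof.
  intros Hc H. apply (f_equal (Cmult (/ c))) in H.
  now rewrite !Cmult_assoc, Cinv_l, !Cmult_1_l in H.
Qed.

Lemma one_sub_neq_0 (w : C) : Cmod w < 1 -> (1 - w)%C <> 0.
Proof. intros Hw Heq. apply Ceq_minus in Heq. rewrite <- Heq, Cmod_1 in Hw. lra. Qed.

Lemma Cmod_re_im_le (z : C) : Cmod z <= Rabs (Re z) + Rabs (Im z).
Proof.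
  apply Rsqr_incr_0_var; [|pose proof (Rabs_pos (Re z)); pose proof (Rabs_pos (Im z)); lra].
  rewrite Rsqr_pow2, Cmod2_alt, !Rsqr_pow2, <- (pow2_abs (Re z)), <- (pow2_abs (Im z)).
  pose proof (Rabs_pos (Re z)); pose proof (Rabs_pos (Im z)). nra.
Qed.

Lemma Cmod_le_all_pos_eq_0 (z : C) : (forall eta, 0 < eta -> Cmod z <= eta) -> z = 0.
Proof.
  intros H. apply Cmod_eq_0. pose proof (Cmod_ge_0 z).
  destruct (Req_dec (Cmod z) 0) as [Heq|]; [exact Heq|]. specialize (H (Cmod z / 2)). lra.
Qed.

(** * Points of the unit circle *)

Definition E (x : R) : C := (cos x, sin x).

Lemma Cmod_E (x : R) : Cmod (E x) = 1.
Proof.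
  unfold Cmod, E; cbn [fst snd].
  replace (cos x ^ 2 + sin x ^ 2) with 1 by (pose proof (sin2_cos2 x); unfold Rsqr in *; nra).
  apply sqrt_1.
Qed.

Lemma E_neq_0 (x : R) : E x <> 0.
Proof. intros H. pose proof (Cmod_E x) as M. rewrite H, Cmod_0 in M. lra. Qed.

Lemma E_0 : E 0 = 1.
Proof. unfold E. now rewrite cos_0, sin_0. Qed.

Lemma E_add (x y : R) : E (x + y) = (E x * E y)%C.
Proof. unfold E, Cmult; simpl. rewrite cos_plus, sin_plus. f_equal; ring. Qed.

Lemma E_opp (x : R) : E (- x) = (/ E x)%C.
Proof.
  apply (Cmult_reg_l _ _ (E x)); [apply E_neq_0|].
  rewrite Cinv_r, <- E_add, Rplus_opp_r by apply E_neq_0. apply E_0.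
Qed.

Lemma E_mult_INR (n : nat) (x : R) : E (INR n * x) = (E x ^ n)%C.
Proof.
  induction n as [|n IH]; [now rewrite Rmult_0_l, E_0|].
  rewrite S_INR, Rmult_plus_distr_r, Rmult_1_l, Rplus_comm, E_add, IH. reflexivity.
Qed.

Lemma E_2PI : E (2 * PI) = 1.
Proof. unfold E. now rewrite cos_2PI, sin_2PI. Qed.

Lemma E_IZR_2PI (m : Z) : E (IZR m * (2 * PI)) = 1.
Proof.
  assert (Hnat : forall n : nat, E (INR n * (2 * PI)) = 1).
  { intros n. rewrite E_mult_INR, E_2PI. apply Cpow_1_l. }
  destruct (Z_le_gt_dec 0 m).
  - rewrite <- (Z2Nat.id m), <- INR_IZR_INZ by lia. apply Hnat.
  - replace (IZR m * (2 * PI)) with (- (INR (Z.to_nat (- m)) * (2 * PI)))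
      by (rewrite INR_IZR_INZ, Z2Nat.id, opp_IZR by lia; ring).
    rewrite E_opp, Hnat. field.
Qed.

Lemma E_eq_1_int (x : R) : E (2 * PI * x) = 1 -> exists m : Z, x = IZR m.
Proof.
  intros H. apply (f_equal fst) in H. cbn in H.
  replace (2 * PI * x) with (2 * (PI * x)) in H by ring. rewrite cos_2a_sin in H.
  destruct (sin_eq_0_0 (PI * x)) as [m Hm]; [nra|].
  exists m. pose proof PI_RGT_0. apply (Rmult_eq_reg_l PI); lra.
Qed.

Lemma Cmod_E_sub_1 (x : R) : Cmod (E x - 1) <= 2 * Rabs x.
Proof.
  eapply Rle_trans; [apply Cmod_re_im_le|]. cbn.
  assert (Hc : Rabs (cos x - cos 0) <= 1 * Rabs (x - 0)).
  { apply (bounded_variation cos (fun t => - sin t)). intros t _. split.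
    - apply is_derive_Reals, derivable_pt_lim_cos.
    - rewrite Rabs_Ropp. apply Rabs_le, SIN_bound. }
  assert (Hs : Rabs (sin x - sin 0) <= 1 * Rabs (x - 0)).
  { apply (bounded_variation sin cos). intros t _. split.
    - apply is_derive_Reals, derivable_pt_lim_sin.
    - apply Rabs_le, COS_bound. }
  rewrite cos_0, sin_0, !Rminus_0_r in *. unfold Rminus in Hc. rewrite Ropp_0, Rplus_0_r. lra.
Qed.

Lemma unit_E (u : C) : Cmod u = 1 -> exists x, u = E x.
Proof.
  destruct u as [u1 u2]. intros H.
  assert (Hs : u1 ^ 2 + u2 ^ 2 = 1).
  { apply (f_equal (fun r => r ^ 2)) in H. rewrite Cmod2_alt in H. cbn in H. lra. }
  assert (Hb : -1 <= u1 <= 1) by nra.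
  assert (Hsq : 1 - u1² = u2²) by (unfold Rsqr; lra).
  destruct (Rle_dec 0 u2).
  - exists (acos u1). unfold E. rewrite cos_acos, sin_acos, Hsq, sqrt_Rsqr by assumption.
    reflexivity.
  - exists (- acos u1). unfold E.
    rewrite cos_neg, sin_neg, cos_acos, sin_acos, Hsq, (Rsqr_neg u2), sqrt_Rsqr by lra.
    f_equal. ring.
Qed.

Lemma pigeonhole (K : nat) (f : nat -> nat) :
  (forall j, (j <= K)%nat -> (f j < K)%nat) -> exists i j, (i < j <= K)%nat /\ f i = f j.
Proof.
  revert f. induction K as [|K IH]; intros f Hf.
  - specialize (Hf 0%nat (le_n 0)). lia.
  - set (v := f (S K)).
    destruct (classic (exists j, (j <= K)%nat /\ f j = v)) as [[j [Hj Ej]]|Hnone].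
    + exists j, (S K). split; [lia|exact Ej].
    + assert (Hne : forall j, (j <= K)%nat -> f j <> v) by (intros j Hj Ej; apply Hnone; eauto).
      set (g := fun j => if (f j <? v)%nat then f j else (f j - 1)%nat).
      assert (Hv : (v < S K)%nat) by (apply Hf; lia).
      destruct (IH g) as (i & j & Hij & Eg).
      { intros j Hj. unfold g. specialize (Hne j Hj). specialize (Hf j ltac:(lia)).
        destruct (Nat.ltb_spec (f j) v); lia. }
      exists i, j. split; [lia|].
      specialize (Hne i ltac:(lia)) as Hi. specialize (Hne j ltac:(lia)) as Hj.
      unfold g in Eg. destruct (Nat.ltb_spec (f i) v), (Nat.ltb_spec (f j) v); lia.
Qed.

Lemma Dirichlet_approximation (x : R) (K : nat) : (0 < K)%nat ->
  exists (n : nat) (m : Z), (0 < n)%nat /\ Rabs (INR n * x - IZR m) < / INR K.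
Proof.
  intros HK. assert (HKr : 0 < INR K) by (apply lt_0_INR; exact HK).
  set (bin := fun j : nat => Z.to_nat (Int_part (INR K * frac_part (INR j * x)))).
  assert (Hbin : forall j, INR (bin j) <= INR K * frac_part (INR j * x) < INR (bin j) + 1
                           /\ (bin j < K)%nat).
  { intros j. set (y := INR K * frac_part (INR j * x)).
    assert (Hy : 0 <= y < INR K) by (pose proof (base_fp (INR j * x)); unfold y; nra).
    pose proof (base_Int_part y) as [I1 I2].
    assert (Hlo : (0 <= Int_part y)%Z) by (cut (-1 < Int_part y)%Z; [lia|apply lt_IZR; lra]).
    assert (Hhi : (Int_part y < Z.of_nat K)%Z) by (apply lt_IZR; rewrite <- INR_IZR_INZ; lra).
    unfold bin; fold y. rewrite INR_IZR_INZ, Z2Nat.id by exact Hlo. split; [lra|lia]. }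
  destruct (pigeonhole K bin (fun j _ => proj2 (Hbin j))) as (i & j & Hij & Hb).
  exists (j - i)%nat, (Int_part (INR j * x) - Int_part (INR i * x))%Z. split; [lia|].
  rewrite minus_INR, minus_IZR by lia.
  replace ((INR j - INR i) * x - (IZR (Int_part (INR j * x)) - IZR (Int_part (INR i * x))))
    with (frac_part (INR j * x) - frac_part (INR i * x)) by (unfold frac_part; ring).
  destruct (Hbin i) as [[Bi1 Bi2] _], (Hbin j) as [[Bj1 Bj2] _]. rewrite Hb in Bi1, Bi2.
  assert (Hd : Rabs (INR K * (frac_part (INR j * x) - frac_part (INR i * x))) < 1)
    by (apply Rabs_def1; lra).
  rewrite Rabs_mult, Rabs_pos_eq in Hd by lra.
  apply (Rmult_lt_reg_l (INR K)); [exact HKr|]. rewrite Rinv_r; lra.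
Qed.

Lemma unit_pow_near_1 (s : C) : Cmod s = 1 ->
  forall del, 0 < del -> exists n, (0 < n)%nat /\ Cmod (s ^ n - 1) < del.
Proof.
  intros Hs del Hdel. destruct (unit_E s Hs) as [b ->]. pose proof PI_RGT_0.
  destruct (INR_archimed del (4 * PI)) as [K HK]; [lra|].
  assert (HK0 : (0 < K)%nat) by (destruct K; [simpl in HK; lra|lia]).
  assert (HKr : 0 < INR K) by (apply lt_0_INR; exact HK0).
  destruct (Dirichlet_approximation (b / (2 * PI)) K HK0) as (n & m & Hn & Happ).
  exists n. split; [exact Hn|].
  rewrite <- E_mult_INR.
  replace (INR n * b) with (2 * PI * (INR n * (b / (2 * PI)) - IZR m) + IZR m * (2 * PI))
    by (field; lra).
  rewrite E_add, E_IZR_2PI, Cmult_1_r.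
  eapply Rle_lt_trans; [apply Cmod_E_sub_1|].
  rewrite Rabs_mult, (Rabs_pos_eq (2 * PI)) by lra.
  apply (Rmult_lt_reg_l (INR K)); [exact HKr|].
  assert (INR K * Rabs (INR n * (b / (2 * PI)) - IZR m) < 1)
    by (rewrite <- (Rinv_r (INR K)) by lra; apply Rmult_lt_compat_l; assumption).
  nra.
Qed.

(** * Complex derivatives *)

Definition is_C_derive_eps (f : C -> C) (z l : C) : Prop :=
  forall eps, 0 < eps -> exists del, 0 < del /\
    forall k : C, Cmod k < del -> Cmod (f (z + k) - f z - l * k)%C <= eps * Cmod k.

Lemma is_C_derive_eps_iff (f : C -> C) (z l : C) :
  is_derive f z l <-> is_C_derive_eps f z l.
Proof.
  split.
  - intros [_ H] eps Heps.
    specialize (H z (fun P HP => HP) (mkposreal eps Heps)).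
    apply (@locally_le_locally_norm C_AbsRing (AbsRing_NormedModule C_AbsRing)) in H.
    destruct H as [d Hd]. exists d. split; [apply cond_pos|].
    intros k Hk.
    assert (Hzk : ball_norm z d (z + k)%C).
    { apply (@norm_compat1 C_AbsRing (AbsRing_NormedModule C_AbsRing)).
      change (Cmod (z + k - z)%C < d). now replace (z + k - z)%C with k by ring. }
    specialize (Hd (z + k)%C Hzk).
    unfold norm, minus, scal, plus, opp in Hd; simpl in Hd.
    change (abs ?x) with (Cmod x) in Hd. change (mult ?x ?y) with (x * y)%C in Hd.
    replace (z + k + - z)%C with k in Hd by ring.
    replace (f (z + k) - f z - l * k)%C with (f (z + k)%C + - f z + - (k * l))%C by ring.
    exact Hd.
  - intros H. split; [apply is_linear_scal_l|].
    intros x Hx.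
    apply (@is_filter_lim_locally_unique C_AbsRing (AbsRing_NormedModule C_AbsRing)) in Hx.
    subst x. intros eps.
    apply (@locally_norm_le_locally C_AbsRing (AbsRing_NormedModule C_AbsRing)).
    destruct (H eps (cond_pos eps)) as [d [Hd H']].
    exists (mkposreal d Hd). intros y Hy. change C in y. unfold ball_norm in Hy.
    unfold norm, minus, scal, plus, opp in Hy |- *; simpl in Hy |- *.
    change (abs ?x) with (Cmod x) in Hy |- *. change (mult ?x ?y) with (x * y)%C.
    specialize (H' (y + - z)%C Hy).
    replace (z + (y + - z))%C with y in H' by ring.
    replace (f y + - f z + - ((y + - z) * l))%C with (f y - f z - l * (y + - z))%C by ring.
    exact H'.
Qed.

Lemma is_derive_Cinv (z : C) : z <> 0 -> is_derive Cinv z (- / (z * z))%C.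
Proof.
  intros Hz. apply is_C_derive_eps_iff. intros eps Heps.
  set (m := Cmod z). assert (Hm : 0 < m) by (apply Cmod_gt_0; exact Hz).
  exists (Rmin (m / 2) (eps * (m * m * m) / 2)). split.
  { apply Rmin_pos; [lra|]. assert (0 < m * m * m) by (repeat apply Rmult_lt_0_compat; lra). nra. }
  intros k Hk.
  assert (k1 : Cmod k < m / 2) by (eapply Rlt_le_trans; [exact Hk|apply Rmin_l]).
  assert (k2 : Cmod k < eps * (m * m * m) / 2) by (eapply Rlt_le_trans; [exact Hk|apply Rmin_r]).
  assert (Hzk : m / 2 <= Cmod (z + k)%C).
  { pose proof (Cmod_triangle (z + k)%C (- k)%C) as T. rewrite Cmod_opp in T.
    replace (z + k + - k)%C with z in T by ring. fold m in T. lra. }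
  assert (Hzk0 : (z + k)%C <> 0) by (intros Heq; rewrite Heq, Cmod_0 in Hzk; lra).
  replace (/ (z + k) - / z - - / (z * z) * k)%C with (k * k / (z * z * (z + k)))%C
    by (field; auto).
  rewrite Cmod_div by (repeat apply Cmult_neq_0; auto).
  rewrite !Cmod_mult. fold m. pose proof (Cmod_ge_0 k).
  assert (Hp : 0 < m * m * Cmod (z + k)%C) by (repeat apply Rmult_lt_0_compat; lra).
  apply (Rmult_le_reg_r (m * m * Cmod (z + k)%C)); [exact Hp|].
  unfold Rdiv. rewrite Rmult_assoc, Rinv_l, Rmult_1_r by lra.
  assert (m * m * m / 2 <= m * m * Cmod (z + k)%C).
  { replace (m * m * m / 2) with (m * m * (m / 2)) by field.
    apply Rmult_le_compat_l; [nra|exact Hzk]. }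
  assert (Cmod k * Cmod k <= Cmod k * (eps * (m * m * m) / 2))
    by (apply Rmult_le_compat_l; lra).
  nra.
Qed.

Lemma is_derive_locally_bounded (f : C -> C) (z l : C) :
  is_derive f z l -> exists del B, 0 < del /\ forall k, Cmod k < del -> Cmod (f (z + k)%C) <= B.
Proof.
  rewrite is_C_derive_eps_iff. intros H.
  destruct (H 1 Rlt_0_1) as (del & Hdel & Hf).
  exists del, (Cmod (f z) + (Cmod l + 1) * del). split; [exact Hdel|]. intros k Hk.
  specialize (Hf k Hk).
  replace (f (z + k)%C) with (f z + l * k + (f (z + k) - f z - l * k))%C by ring.
  eapply Rle_trans; [apply Cmod_triangle|].
  eapply Rle_trans; [apply Rplus_le_compat_r, Cmod_triangle|].
  rewrite Cmod_mult. pose proof (Cmod_ge_0 l). pose proof (Cmod_ge_0 k). nra.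
Qed.

(* Coquelicot states its product and chain rules for the structure
   [AbsRing_NormedModule C_AbsRing] on [C], which differs from the canonical [C_NormedModule]
   only in its norm factor. *)
Lemma is_derive_C_AbsRing_iff (f : C -> C) (z l : C) :
  is_derive f z l <-> @is_derive C_AbsRing (AbsRing_NormedModule C_AbsRing) f z l.
Proof. split; intros [_ H]; (split; [apply is_linear_scal_l|exact H]). Qed.

Lemma ex_derive_C_AbsRing_iff (f : C -> C) (z : C) :
  ex_derive f z <-> @ex_derive C_AbsRing (AbsRing_NormedModule C_AbsRing) f z.
Proof. split; intros [l H]; exists l; now apply is_derive_C_AbsRing_iff. Qed.

Lemma ex_derive_Cmult (f g : C -> C) (z : C) :
  ex_derive f z -> ex_derive g z -> ex_derive (fun y => f y * g y)%C z.
Proof.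
  intros [lf Hf] [lg Hg]. eexists. apply is_derive_C_AbsRing_iff.
  apply (is_derive_mult f g z lf lg);
    [apply is_derive_C_AbsRing_iff..|apply Cmult_comm]; assumption.
Qed.

Lemma ex_derive_Ccomp (f g : C -> C) (z : C) :
  ex_derive f (g z) -> ex_derive g z -> ex_derive (fun y => f (g y)) z.
Proof. intros Hf Hg. apply ex_derive_comp; [exact Hf|now apply ex_derive_C_AbsRing_iff]. Qed.

Lemma ex_derive_Cpow (f : C -> C) (z : C) (n : nat) :
  ex_derive f z -> ex_derive (fun y => f y ^ n)%C z.
Proof.
  intros Hf. induction n as [|n IH].
  - change (@ex_derive C_AbsRing C_NormedModule (fun _ : C => RtoC 1) z). apply ex_derive_const.
  - exact (ex_derive_Cmult _ _ z Hf IH).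
Qed.

Lemma ex_derive_Cinv (f : C -> C) (z : C) :
  ex_derive f z -> f z <> 0 -> ex_derive (fun y => / f y)%C z.
Proof.
  intros Hf Hz. apply (ex_derive_Ccomp Cinv f z); [|exact Hf].
  eexists. exact (is_derive_Cinv _ Hz).
Qed.

(** * Derivatives of curves in C *)

Lemma derivable_pt_lim_eps (f : R -> R) (t l : R) :
  derivable_pt_lim f t l <->
  forall eps, 0 < eps -> exists del, 0 < del /\
    forall h, Rabs h < del -> Rabs (f (t + h) - f t - h * l) <= eps * Rabs h.
Proof.
  split.
  - intros H eps Heps. destruct (H eps Heps) as [del Hdel].
    exists del. split; [apply cond_pos|]. intros h Hh.
    destruct (Req_dec h 0) as [->|Hh0].
    + rewrite Rplus_0_r, Rabs_R0. replace (f t - f t - 0 * l) with 0 by ring.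
      rewrite Rabs_R0. lra.
    + specialize (Hdel h Hh0 Hh).
      replace (f (t + h) - f t - h * l) with (((f (t + h) - f t) / h - l) * h)
        by (field; exact Hh0).
      rewrite Rabs_mult. apply Rmult_le_compat_r; [apply Rabs_pos|lra].
  - intros H eps Heps. destruct (H (eps / 2)) as (del & Hdel & Hf); [lra|].
    exists (mkposreal del Hdel). intros h Hh0 Hh. specialize (Hf h Hh).
    pose proof (Rabs_pos_lt h Hh0).
    replace ((f (t + h) - f t) / h - l) with ((f (t + h) - f t - h * l) / h) by (field; exact Hh0).
    unfold Rdiv. rewrite Rabs_mult, Rabs_inv.
    apply (Rmult_lt_reg_r (Rabs h)); [assumption|].
    rewrite Rmult_assoc, Rinv_l by lra. nra.
Qed.

Definition is_curve_derive (p : R -> C) (t : R) (l : C) : Prop :=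
  forall eps, 0 < eps -> exists del, 0 < del /\
    forall h : R, Rabs h < del -> Cmod (p (t + h)%R - p t - h * l)%C <= eps * Rabs h.

Lemma is_curve_derive_iff (p : R -> C) (t : R) (l : C) :
  is_curve_derive p t l <->
  is_derive (fun s => Re (p s)) t (Re l) /\ is_derive (fun s => Im (p s)) t (Im l).
Proof.
  rewrite !is_derive_Reals, !derivable_pt_lim_eps.
  assert (Hre : forall h, Re (p (t + h)%R - p t - h * l)%C = Re (p (t + h)) - Re (p t) - h * Re l)
    by (intros h; destruct (p (t + h)), (p t), l; cbn; ring).
  assert (Him : forall h, Im (p (t + h)%R - p t - h * l)%C = Im (p (t + h)) - Im (p t) - h * Im l)
    by (intros h; destruct (p (t + h)), (p t), l; cbn; ring).
  split.
  - intros H. split; intros eps Heps; destruct (H eps Heps) as (del & Hdel & Hp);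
      exists del; (split; [exact Hdel|]); intros h Hh;
      (eapply Rle_trans; [|exact (Hp h Hh)]).
    + rewrite <- Hre. apply re_le_Cmod.
    + rewrite <- Him. eapply Rle_trans; [apply Rmax_r|apply Rmax_Cmod].
  - intros [H1 H2] eps Heps.
    destruct (H1 (eps / 2)) as (d1 & Hd1 & P1); [lra|].
    destruct (H2 (eps / 2)) as (d2 & Hd2 & P2); [lra|].
    exists (Rmin d1 d2). split; [now apply Rmin_pos|]. intros h Hh.
    specialize (P1 h (Rlt_le_trans _ _ _ Hh (Rmin_l _ _))).
    specialize (P2 h (Rlt_le_trans _ _ _ Hh (Rmin_r _ _))).
    eapply Rle_trans; [apply Cmod_re_im_le|]. rewrite Hre, Him. lra.
Qed.

Lemma is_curve_derive_const (a : C) (t : R) : is_curve_derive (fun _ => a) t 0.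
Proof. apply is_curve_derive_iff. split; apply is_derive_Reals, derivable_pt_lim_const. Qed.

Lemma is_curve_derive_RtoC (f : R -> R) (t l : R) :
  is_derive f t l -> is_curve_derive (fun s => RtoC (f s)) t l.
Proof.
  intros H. apply is_curve_derive_iff.
  split; [exact H|apply is_derive_Reals, derivable_pt_lim_const].
Qed.

Lemma is_curve_derive_E (t : R) : is_curve_derive E t (Ci * E t)%C.
Proof.
  apply is_curve_derive_iff. cbn. split.
  - auto_derive; [exact I|ring].
  - auto_derive; [exact I|ring].
Qed.

Lemma is_curve_derive_E_scal (c t : R) :
  is_curve_derive (fun s => E (c * s)) t (c * Ci * E (c * t))%C.
Proof.
  apply is_curve_derive_iff. cbn. split.
  - auto_derive; [exact I|ring].
  - auto_derive; [exact I|ring].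
Qed.

Lemma is_curve_derive_mult (p q : R -> C) (t : R) (lp lq : C) :
  is_curve_derive p t lp -> is_curve_derive q t lq ->
  is_curve_derive (fun s => p s * q s)%C t (lp * q t + p t * lq)%C.
Proof.
  rewrite !is_curve_derive_iff, !is_derive_Reals. unfold Re, Im. cbn.
  intros [P1 P2] [Q1 Q2]. split.
  - apply (derivable_pt_lim_ext
      ((fun s => fst (p s)) * (fun s => fst (q s))
       - (fun s => snd (p s)) * (fun s => snd (q s)))%F);
      [reflexivity|].
    replace (fst lp * fst (q t) - snd lp * snd (q t) + (fst (p t) * fst lq - snd (p t) * snd lq))
      with ((fst lp * fst (q t) + fst (p t) * fst lq) - (snd lp * snd (q t) + snd (p t) * snd lq))
      by ring.
    apply derivable_pt_lim_minus; apply derivable_pt_lim_mult; assumption.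
  - apply (derivable_pt_lim_ext
      ((fun s => fst (p s)) * (fun s => snd (q s))
       + (fun s => snd (p s)) * (fun s => fst (q s)))%F);
      [reflexivity|].
    replace (fst lp * snd (q t) + snd lp * fst (q t) + (fst (p t) * snd lq + snd (p t) * fst lq))
      with ((fst lp * snd (q t) + fst (p t) * snd lq) + (snd lp * fst (q t) + snd (p t) * fst lq))
      by ring.
    apply derivable_pt_lim_plus; apply derivable_pt_lim_mult; assumption.
Qed.

Lemma is_curve_derive_0_eq (p : R -> C) (a b : R) :
  a <= b -> (forall t, a <= t <= b -> is_curve_derive p t 0) -> p a = p b.
Proof.
  intros Hab H. destruct (Req_dec a b) as [->|Hne]; [reflexivity|].
  assert (Hc : forall c : R -> R,
             (forall t, a <= t <= b -> is_derive (fun s => c s) t 0) -> c a = c b)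
    by (intros c Hc; apply (eq_is_derive c); [exact Hc|lra]).
  apply injective_projections; [apply (Hc (fun s => Re (p s)))|apply (Hc (fun s => Im (p s)))];
    intros t Ht; apply (is_curve_derive_iff p t 0), H, Ht.
Qed.

Lemma is_curve_derive_comp (f : C -> C) (p : R -> C) (t : R) (lf lp : C) :
  is_derive f (p t) lf -> is_curve_derive p t lp ->
  is_curve_derive (fun s => f (p s)) t (lf * lp)%C.
Proof.
  rewrite is_C_derive_eps_iff. intros Hf Hp eps Heps.
  set (A := Cmod lp + 1). set (B := Cmod lf + 1).
  assert (HA : 0 < A) by (pose proof (Cmod_ge_0 lp); unfold A; lra).
  assert (HB : 0 < B) by (pose proof (Cmod_ge_0 lf); unfold B; lra).
  destruct (Hp 1 Rlt_0_1) as (d1 & Hd1 & H1).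
  destruct (Hf (eps / (2 * A))) as (d2 & Hd2 & H2); [apply Rdiv_lt_0_compat; lra|].
  destruct (Hp (eps / (2 * B))) as (d3 & Hd3 & H3); [apply Rdiv_lt_0_compat; lra|].
  exists (Rmin d1 (Rmin (d2 / A) d3)).
  split; [repeat apply Rmin_pos; try apply Rdiv_lt_0_compat; lra|].
  intros h Hh.
  pose proof (Rmin_l d1 (Rmin (d2 / A) d3)). pose proof (Rmin_r d1 (Rmin (d2 / A) d3)).
  pose proof (Rmin_l (d2 / A) d3). pose proof (Rmin_r (d2 / A) d3).
  specialize (H1 h ltac:(lra)). specialize (H3 h ltac:(lra)).
  set (k := (p (t + h)%R - p t)%C).
  assert (Hk : Cmod k <= A * Rabs h).
  { replace k with ((p (t + h)%R - p t - h * lp) + h * lp)%C by (unfold k; ring).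
    eapply Rle_trans; [apply Cmod_triangle|]. rewrite Cmod_mult, Cmod_R.
    pose proof (Rabs_pos h). unfold A. nra. }
  assert (Hk2 : Cmod k < d2).
  { assert (A * Rabs h < A * (d2 / A)) by (apply Rmult_lt_compat_l; lra).
    replace (A * (d2 / A)) with d2 in * by (field; lra). lra. }
  specialize (H2 k Hk2). replace (p t + k)%C with (p (t + h)%R) in H2 by (unfold k; ring).
  replace (f (p (t + h)%R) - f (p t) - h * (lf * lp))%C
    with ((f (p (t + h)%R) - f (p t) - lf * k) + lf * (p (t + h)%R - p t - h * lp))%C
    by (unfold k; ring).
  eapply Rle_trans; [apply Cmod_triangle|]. rewrite Cmod_mult.
  assert (T1 : eps / (2 * A) * Cmod k <= eps / 2 * Rabs h).
  { replace (eps / 2 * Rabs h) with (eps / (2 * A) * (A * Rabs h)) by (field; lra).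
    apply Rmult_le_compat_l; [apply Rlt_le, Rdiv_lt_0_compat; lra|exact Hk]. }
  assert (T2 : Cmod lf * Cmod (p (t + h)%R - p t - h * lp)%C <= eps / 2 * Rabs h).
  { eapply Rle_trans; [apply Rmult_le_compat_l; [apply Cmod_ge_0|exact H3]|].
    replace (eps / 2 * Rabs h) with (B * (eps / (2 * B) * Rabs h)) by (field; lra).
    apply Rmult_le_compat_r; [|unfold B; lra].
    apply Rmult_le_pos; [apply Rlt_le, Rdiv_lt_0_compat; lra|apply Rabs_pos]. }
  lra.
Qed.

(** * Twisted-invariant functions on the unit disk *)

Lemma twisted_invariance_pow (F : C -> C) (s mu : C) :
  Cmod s = 1 -> (forall w, Cmod w < 1 -> F (s * w)%C = (mu * F w)%C) ->
  forall n w, Cmod w < 1 -> F (s ^ n * w)%C = (mu ^ n * F w)%C.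
Proof.
  intros Hs H. induction n as [|n IH]; intros w Hw.
  - cbn. now rewrite !Cmult_1_l.
  - rewrite !Cpow_S, <- !Cmult_assoc, H, IH; [reflexivity|exact Hw|].
    rewrite Cmod_mult, Cmod_pow, Hs, pow1. lra.
Qed.

Lemma radial_pow_invariant_eq_0 (F : C -> C) (w c : C) (n : nat) :
  ex_derive F (RtoC 0) -> (0 < n)%nat ->
  (forall r, 0 < r <= 1 -> (F (r * w) * RtoC (r ^ n)%R)%C = c) -> c = 0.
Proof.
  intros [l Hl] Hn Hc.
  destruct (is_derive_locally_bounded F 0 l Hl) as (del & B & Hdel & HB).
  assert (HB0 : 0 <= B) by (eapply Rle_trans; [apply Cmod_ge_0|]; apply (HB 0); now rewrite Cmod_0).
  pose proof (Cmod_ge_0 w).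
  apply Cmod_le_all_pos_eq_0. intros eta Heta.
  set (r := Rmin 1 (Rmin (del / (Cmod w + 1)) (eta / (B + 1)))).
  assert (Hr : 0 < r) by (repeat apply Rmin_pos; try apply Rdiv_lt_0_compat; lra).
  pose proof (Rmin_l 1 (Rmin (del / (Cmod w + 1)) (eta / (B + 1)))) as Hr1.
  pose proof (Rmin_r 1 (Rmin (del / (Cmod w + 1)) (eta / (B + 1)))) as Hr2.
  pose proof (Rmin_l (del / (Cmod w + 1)) (eta / (B + 1))) as Hr3.
  pose proof (Rmin_r (del / (Cmod w + 1)) (eta / (B + 1))) as Hr4. fold r in Hr1, Hr2.
  assert (HFr : Cmod (F (r * w)%C) <= B).
  { rewrite <- (Cplus_0_l (r * w)). apply HB.
    rewrite Cmod_mult, Cmod_R, Rabs_pos_eq by lra.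
    assert (r * (Cmod w + 1) <= del)
      by (replace del with (del / (Cmod w + 1) * (Cmod w + 1)) by (field; lra);
          apply Rmult_le_compat_r; lra).
    nra. }
  assert (Hpow : r ^ n <= r).
  { replace (r ^ n) with (r * r ^ pred n) by (destruct n; [lia|reflexivity]).
    pose proof (pow_le r (pred n) ltac:(lra)). pose proof (pow_incr r 1 (pred n) ltac:(lra)).
    rewrite pow1 in *. nra. }
  rewrite <- (Hc r) by lra. rewrite Cmod_mult, Cmod_R, Rabs_pos_eq by (apply pow_le; lra).
  assert (r * (B + 1) <= eta)
    by (replace eta with (eta / (B + 1) * (B + 1)) by (field; lra); apply Rmult_le_compat_r; lra).
  pose proof (pow_le r n ltac:(lra)). nra.
Qed.

Lemma twisted_invariance_first_order (F : C -> C) (s mu w : C) :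
  Cmod s = 1 -> (forall w, Cmod w < 1 -> F (s * w)%C = (mu * F w)%C) ->
  Cmod w < 1 -> ex_derive F w ->
  forall eps, 0 < eps -> exists del, 0 < del /\ forall n, Cmod (s ^ n - 1) < del ->
    Cmod ((mu ^ n - 1) * F w - C_derive F w * ((s ^ n - 1) * w))%C
      <= eps * (Cmod (s ^ n - 1) * Cmod w).
Proof.
  intros Hs Hinv Hw HFw eps Heps.
  destruct (proj1 (is_C_derive_eps_iff _ _ _) (C_derive_correct F w w HFw) eps Heps)
    as (del & Hdel & Hd).
  exists del. split; [exact Hdel|]. intros n Hn.
  assert (Hk : Cmod ((s ^ n - 1) * w)%C < del).
  { rewrite Cmod_mult. pose proof (Cmod_ge_0 (s ^ n - 1)%C). pose proof (Cmod_ge_0 w). nra. }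
  specialize (Hd _ Hk). rewrite <- Cmod_mult.
  replace (w + (s ^ n - 1) * w)%C with (s ^ n * w)%C in Hd by ring.
  rewrite (twisted_invariance_pow F s mu Hs Hinv n w Hw) in Hd.
  replace ((mu ^ n - 1) * F w - C_derive F w * ((s ^ n - 1) * w))%C
    with (mu ^ n * F w - F w - C_derive F w * ((s ^ n - 1) * w))%C by ring.
  exact Hd.
Qed.

(* Subtract the first-order expansions at [w] and [w'] along a power [s ^ n] close to, but
   different from, 1: the terms in [mu ^ n - 1] cancel. *)
Lemma twisted_invariance_euler_cross (F : C -> C) (s mu : C) :
  (forall w, Cmod w < 1 -> ex_derive F w) ->
  Cmod s = 1 -> (forall n, (0 < n)%nat -> (s ^ n)%C <> 1) ->
  (forall w, Cmod w < 1 -> F (s * w)%C = (mu * F w)%C) ->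
  forall w w', Cmod w < 1 -> Cmod w' < 1 ->
    (w * C_derive F w * F w')%C = (w' * C_derive F w' * F w)%C.
Proof.
  intros HF Hs Hroot Hinv w w' Hw Hw'.
  apply Ceq_minus, Cmod_le_all_pos_eq_0. intros eta Heta.
  pose proof (Cmod_ge_0 w); pose proof (Cmod_ge_0 w');
    pose proof (Cmod_ge_0 (F w)); pose proof (Cmod_ge_0 (F w')).
  set (K := Cmod w * Cmod (F w') + Cmod w' * Cmod (F w) + 1).
  assert (HK : 0 < K) by (unfold K; nra).
  assert (Heps : 0 < eta / K) by (apply Rdiv_lt_0_compat; assumption).
  destruct (twisted_invariance_first_order F s mu w Hs Hinv Hw (HF w Hw) _ Heps)
    as (d1 & Hd1 & D1).
  destruct (twisted_invariance_first_order F s mu w' Hs Hinv Hw' (HF w' Hw') _ Heps)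
    as (d2 & Hd2 & D2).
  destruct (unit_pow_near_1 s Hs (Rmin d1 d2)) as (n & Hn & Hnear); [now apply Rmin_pos|].
  specialize (D1 n (Rlt_le_trans _ _ _ Hnear (Rmin_l _ _))).
  specialize (D2 n (Rlt_le_trans _ _ _ Hnear (Rmin_r _ _))).
  set (sg := (s ^ n)%C) in *.
  set (e1 := ((mu ^ n - 1) * F w - C_derive F w * ((sg - 1) * w))%C) in D1.
  set (e2 := ((mu ^ n - 1) * F w' - C_derive F w' * ((sg - 1) * w'))%C) in D2.
  assert (Hsg : 0 < Cmod (sg - 1))
    by (apply Cmod_gt_0; intros Heq; now apply (Hroot n Hn), Ceq_minus).
  assert (Hid : ((sg - 1) * (w * C_derive F w * F w' - w' * C_derive F w' * F w))%C
                = (e2 * F w - e1 * F w')%C) by (unfold e1, e2; ring).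
  apply (Rmult_le_reg_l (Cmod (sg - 1)%C)); [exact Hsg|].
  rewrite <- Cmod_mult, Hid. eapply Rle_trans; [apply Cmod_triangle|].
  rewrite Cmod_opp, !Cmod_mult.
  assert (Cmod e2 * Cmod (F w) <= eta / K * (Cmod (sg - 1)%C * Cmod w') * Cmod (F w))
    by (apply Rmult_le_compat_r; assumption).
  assert (Cmod e1 * Cmod (F w') <= eta / K * (Cmod (sg - 1)%C * Cmod w) * Cmod (F w'))
    by (apply Rmult_le_compat_r; assumption).
  set (e := eta / K) in *. replace eta with (e * K) by (unfold e; field; lra).
  unfold K. nra.
Qed.

Section Euler_equation.

Variable F : C -> C.
Hypothesis HF : forall w, Cmod w < 1 -> ex_derive F w.
Variable L : C.
Hypothesis Heuler : forall w, Cmod w < 1 -> (w * C_derive F w)%C = (L * F w)%C.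
Variable w1 : C.
Hypothesis Hw1 : Cmod w1 < 1.

Let HD (y : C) (Hy : Cmod y < 1) : is_derive F y (C_derive F y) :=
  C_derive_correct F y y (HF y Hy).

Lemma euler_rotation (t : R) :
  (F (E t * w1) * (exp (Im L * t) * E (- Re L * t)))%C = F w1.
Proof.
  set (a := Re L). set (b := Im L).
  (* [Q t = exp (- i L t)], so by the Euler equation [v] has derivative 0. *)
  set (Q := fun t => (RtoC (exp (b * t)) * E (- a * t))%C).
  set (v := fun t => (F (E t * w1) * Q t)%C).
  assert (Hin : forall t, Cmod (E t * w1)%C < 1) by (intros s; rewrite Cmod_mult, Cmod_E; lra).
  assert (Hv : forall t, is_curve_derive v t 0).
  { intros s.
    assert (Prot : is_curve_derive (fun r => E r * w1)%C s (Ci * E s * w1)%C).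
    { replace (Ci * E s * w1)%C with (Ci * E s * w1 + E s * 0)%C by ring.
      apply is_curve_derive_mult; [apply is_curve_derive_E|apply is_curve_derive_const]. }
    assert (Pexp : is_derive (fun r => exp (b * r)) s (b * exp (b * s)))
      by (auto_derive; [exact I|ring]).
    assert (Pv := is_curve_derive_mult _ _ s _ _
      (is_curve_derive_comp F _ s _ _ (HD _ (Hin s)) Prot)
      (is_curve_derive_mult _ _ s _ _
         (is_curve_derive_RtoC _ s _ Pexp) (is_curve_derive_E_scal (- a) s))).
    refine (eq_ind _ (is_curve_derive v s) Pv 0 _).
    assert (HL : (Ci * L + b - a * Ci)%C = 0)
      by (apply injective_projections; unfold a, b, Re, Im; cbn; ring).
    transitivity
      ((Ci * ((E s * w1) * C_derive F (E s * w1)) + (b - a * Ci) * F (E s * w1)) * Q s)%C;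
      [unfold Q; rewrite RtoC_mult, RtoC_opp; ring|].
    rewrite Heuler by apply Hin.
    transitivity ((Ci * L + b - a * Ci) * F (E s * w1) * Q s)%C; [ring|].
    rewrite HL. ring. }
  assert (Hv0 : v 0 = F w1).
  { unfold v, Q. rewrite !Rmult_0_r, exp_0, E_0, !Cmult_1_l. apply Cmult_1_r. }
  rewrite <- Hv0. change (v t = v 0).
  destruct (Rle_dec 0 t).
  - symmetry. apply is_curve_derive_0_eq; [assumption|intros; apply Hv].
  - apply is_curve_derive_0_eq; [lra|intros; apply Hv].
Qed.

Lemma euler_exponent_integer : F w1 <> 0 -> exists m : Z, L = IZR m.
Proof.
  intros Hne. pose proof (euler_rotation (2 * PI)) as Hrot.
  rewrite E_2PI, Cmult_1_l in Hrot.
  assert (HQ : (exp (Im L * (2 * PI)) * E (- Re L * (2 * PI)))%C = 1).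
  { apply (Cmult_reg_l _ _ (F w1)); [exact Hne|]. now rewrite Hrot, Cmult_1_r. }
  assert (Hb : Im L = 0).
  { apply (f_equal Cmod) in HQ. rewrite Cmod_mult, Cmod_E, Cmod_R, Cmod_1, Rmult_1_r in HQ.
    rewrite Rabs_pos_eq in HQ by apply Rlt_le, exp_pos.
    rewrite <- exp_0 in HQ. apply exp_inv in HQ. pose proof PI_RGT_0. nra. }
  rewrite Hb, Rmult_0_l, exp_0, Cmult_1_l in HQ.
  destruct (E_eq_1_int (- Re L)) as [m Hm].
  { rewrite <- HQ. f_equal. ring. }
  exists (- m)%Z.
  apply injective_projections; cbn; [rewrite opp_IZR; unfold Re in Hm; lra|exact Hb].
Qed.

Lemma euler_integer_rotation (m : Z) :
  L = IZR m -> forall t, F (E t * w1)%C = (E (IZR m * t) * F w1)%C.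
Proof.
  intros Hm t. pose proof (euler_rotation t) as Hrot.
  rewrite Hm in Hrot. change (Re (IZR m)) with (IZR m) in Hrot. change (Im (IZR m)) with 0 in Hrot.
  rewrite Rmult_0_l, exp_0, Cmult_1_l, Ropp_mult_distr_l_reverse, E_opp in Hrot.
  rewrite <- Hrot. field. apply E_neq_0.
Qed.

Lemma euler_negative_exponent (n : nat) : (0 < n)%nat -> L = RtoC (- INR n) -> F w1 = 0.
Proof.
  intros Hn HL.
  set (G := fun r : R => (F (r * w1) * RtoC (r ^ n)%R)%C).
  assert (Hin : forall r, 0 <= r <= 1 -> Cmod (r * w1)%C < 1).
  { intros r Hr. rewrite Cmod_mult, Cmod_R, Rabs_pos_eq by lra. pose proof (Cmod_ge_0 w1). nra. }
  assert (HG : forall r, 0 <= r <= 1 -> is_curve_derive G r 0).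
  { intros r Hr.
    assert (Pray : is_curve_derive (fun s => RtoC s * w1)%C r (1 * w1 + r * 0)%C).
    { apply is_curve_derive_mult.
      - apply is_curve_derive_RtoC, is_derive_Reals, derivable_pt_lim_id.
      - apply is_curve_derive_const. }
    assert (Ppow : is_derive (fun s => s ^ n) r (INR n * r ^ pred n))
      by apply is_derive_Reals, derivable_pt_lim_pow.
    pose proof (is_curve_derive_mult _ _ r _ _
      (is_curve_derive_comp F _ r _ _ (HD _ (Hin r Hr)) Pray)
      (is_curve_derive_RtoC _ r _ Ppow)) as PG.
    refine (eq_ind _ (is_curve_derive G r) PG 0 _).
    replace (r ^ n) with (r * r ^ pred n) by (destruct n; [lia|reflexivity]).
    rewrite !RtoC_mult.
    transitivity
      (RtoC (r ^ pred n)%R * ((r * w1) * C_derive F (r * w1) + INR n * F (r * w1)))%C; [ring|].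
    rewrite Heuler, HL by (apply Hin, Hr). rewrite RtoC_opp. ring. }
  assert (HGc : forall r, 0 < r <= 1 -> G r = F w1).
  { intros r Hr. transitivity (G 1).
    - apply is_curve_derive_0_eq; [lra|intros; apply HG; lra].
    - unfold G. rewrite pow1, Cmult_1_l. apply Cmult_1_r. }
  apply (radial_pow_invariant_eq_0 F w1 (F w1) n (HF 0 ltac:(rewrite Cmod_0; lra)) Hn HGc).
Qed.

End Euler_equation.

Theorem disk_twisted_invariant_zero (F : C -> C) (s mu : C) :
  (forall w, Cmod w < 1 -> ex_derive F w) ->
  Cmod s = 1 -> (forall n, (0 < n)%nat -> (s ^ n)%C <> 1) -> (forall n, (s ^ n)%C <> mu) ->
  (forall w, Cmod w < 1 -> F (s * w)%C = (mu * F w)%C) ->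
  forall w, Cmod w < 1 -> F w = 0.
Proof.
  intros HF Hs Hroot Hmu Hinv w1 Hw1.
  destruct (Ceq_dec (F w1) 0) as [|Hne]; [assumption|exfalso].
  set (L := (w1 * C_derive F w1 / F w1)%C).
  assert (Heuler : forall w, Cmod w < 1 -> (w * C_derive F w)%C = (L * F w)%C).
  { intros w Hw. apply (Cmult_reg_l _ _ (F w1)); [exact Hne|].
    transitivity (w * C_derive F w * F w1)%C; [ring|].
    rewrite (twisted_invariance_euler_cross F s mu HF Hs Hroot Hinv w w1 Hw Hw1).
    unfold L. field. exact Hne. }
  destruct (euler_exponent_integer F HF L Heuler w1 Hw1 Hne) as [m Hm].
  destruct (Z_le_gt_dec 0 m) as [Hm0|Hm0].
  - apply (Hmu (Z.to_nat m)).
    destruct (unit_E s Hs) as [b Hb].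
    pose proof (euler_integer_rotation F HF L Heuler w1 Hw1 m Hm b) as Hrot.
    rewrite <- Hb, Hinv in Hrot by exact Hw1.
    rewrite Hb, <- E_mult_INR, INR_IZR_INZ, Z2Nat.id by exact Hm0.
    apply (Cmult_reg_l _ _ (F w1)); [exact Hne|]. now rewrite !(Cmult_comm (F w1)).
  - apply Hne, (euler_negative_exponent F HF L Heuler w1 Hw1 (Z.to_nat (- m))); [lia|].
    rewrite Hm, INR_IZR_INZ, Z2Nat.id, opp_IZR, Ropp_involutive by lia. reflexivity.
Qed.

(** * Elliptic elements of SL2(R) *)

(* [cheb2 t n = (U_(n-1) (t/2), U_(n-2) (t/2))] with [U] the Chebyshev polynomials of the second
   kind, so that [x ^ n = U_(n-1) (t/2) x - U_(n-2) (t/2)] for every root [x] of [X^2 - t X + 1];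
   by Cayley-Hamilton the same holds for matrices of determinant 1 and trace [t]. *)
Fixpoint cheb2 (t : R) (n : nat) : R * R :=
  match n with
  | O => (0, -1)
  | S n => (t * fst (cheb2 t n) - snd (cheb2 t n), fst (cheb2 t n))
  end.

Lemma Cpow_cheb2 (t : R) (x : C) (n : nat) : (x * x = t * x - 1)%C ->
  (x ^ n = fst (cheb2 t n) * x - snd (cheb2 t n))%C.
Proof.
  intros Hx. induction n as [|n IH].
  - apply injective_projections; cbn; ring.
  - rewrite Cpow_S, IH. cbn [cheb2 fst snd]. rewrite RtoC_minus, RtoC_mult.
    transitivity (fst (cheb2 t n) * (x * x) - snd (cheb2 t n) * x)%C; [ring|].
    rewrite Hx. ring.
Qed.

Lemma mat2_pow_cheb2 (M : mat2) (n : nat) : in_SL2R M ->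
  mat2_pow M n =
  Mat2 (fst (cheb2 (mat2_tr M) n) * ma M - snd (cheb2 (mat2_tr M) n))
       (fst (cheb2 (mat2_tr M) n) * mb M)
       (fst (cheb2 (mat2_tr M) n) * mc M)
       (fst (cheb2 (mat2_tr M) n) * md M - snd (cheb2 (mat2_tr M) n)).
Proof.
  unfold in_SL2R, mat2_det, mat2_tr. intros Hdet. induction n as [|n IH].
  - cbn. unfold mat2_id. f_equal; ring.
  - cbn [mat2_pow cheb2 fst snd]. rewrite IH. unfold mat2_mul. cbn [ma mb mc md].
    assert (Hu : fst (cheb2 (ma M + md M) n) * (ma M * md M - mb M * mc M)
                 = fst (cheb2 (ma M + md M) n) * 1) by now rewrite Hdet.
    f_equal; lra.
Qed.

(* [fixpt M] is the root of [c z^2 + (d - a) z - b] with positive imaginary part, i.e. the fixed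
   point of [M] in H. *)
Definition fixpt_im (M : mat2) : R := sqrt (4 - mat2_tr M ^ 2) / (2 * Rabs (mc M)).
Definition fixpt (M : mat2) : C := ((ma M - md M) / (2 * mc M), fixpt_im M).
Definition rot (M : mat2) : C := (mc M * Cconj (fixpt M) + md M)%C.
Definition cayley (M : mat2) (w : C) : C := ((fixpt M - Cconj (fixpt M) * w) / (1 - w))%C.

Section Elliptic.

Variable M : mat2.
Hypothesis HSL : in_SL2R M.
Hypothesis Hell : elliptic M.

Lemma elliptic_disc_pos : 0 < 4 - mat2_tr M ^ 2.
Proof. unfold elliptic in Hell. destruct (Rabs_def2 _ _ Hell). nra. Qed.

Lemma elliptic_mc_neq_0 : mc M <> 0.
Proof.
  intros Hc. pose proof elliptic_disc_pos as Hd. unfold in_SL2R, mat2_det, mat2_tr in *.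
  rewrite Hc in HSL. pose proof (pow2_ge_0 (ma M - md M)). nra.
Qed.

Lemma fixpt_im_pos : 0 < fixpt_im M.
Proof.
  apply Rdiv_lt_0_compat; [apply sqrt_lt_R0, elliptic_disc_pos|].
  pose proof (Rabs_pos_lt _ elliptic_mc_neq_0). lra.
Qed.

Lemma mc_fixpt_im_sq : 4 * (mc M * fixpt_im M) ^ 2 = 4 - mat2_tr M ^ 2.
Proof.
  unfold fixpt_im. pose proof elliptic_mc_neq_0 as Hc. pose proof (Rabs_no_R0 _ Hc) as Ha.
  replace (4 * (mc M * (sqrt (4 - mat2_tr M ^ 2) / (2 * Rabs (mc M)))) ^ 2)
    with (mc M ^ 2 * (sqrt (4 - mat2_tr M ^ 2) * sqrt (4 - mat2_tr M ^ 2)) / Rabs (mc M) ^ 2)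
    by (field; exact Ha).
  rewrite sqrt_sqrt, pow2_abs by apply Rlt_le, elliptic_disc_pos. field. exact Hc.
Qed.

Lemma fixpt_fixed (z : C) : z = fixpt M \/ z = Cconj (fixpt M) ->
  (ma M * z + mb M = z * (mc M * z + md M))%C.
Proof.
  pose proof elliptic_mc_neq_0 as Hc. pose proof mc_fixpt_im_sq as Hy.
  unfold in_SL2R, mat2_det, mat2_tr in *.
  intros [-> | ->]; apply injective_projections; cbn;
    field_simplify_eq; try exact Hc; try reflexivity; lra.
Qed.

Lemma rot_eq : rot M = (mat2_tr M / 2, - (mc M * fixpt_im M)).
Proof.
  pose proof elliptic_mc_neq_0 as Hc. unfold mat2_tr.
  apply injective_projections; cbn; field; exact Hc.
Qed.

Lemma rot_conj : Cconj (rot M) = (mc M * fixpt M + md M)%C.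
Proof. apply injective_projections; cbn; ring. Qed.

Lemma rot_mult_conj : (rot M * Cconj (rot M))%C = 1.
Proof.
  pose proof mc_fixpt_im_sq as Hy. rewrite rot_eq.
  apply injective_projections; cbn; lra.
Qed.

Lemma rot_add_conj : (rot M + Cconj (rot M))%C = mat2_tr M.
Proof. rewrite rot_eq. apply injective_projections; cbn; lra. Qed.

Lemma rot_neq_0 : rot M <> 0.
Proof. intros H. pose proof rot_mult_conj as Heq. rewrite H, Cmult_0_l in Heq. now apply C1_nz. Qed.

Lemma conj_rot_eq_inv : Cconj (rot M) = (/ rot M)%C.
Proof.
  apply (Cmult_reg_l _ _ (rot M)); [exact rot_neq_0|].
  rewrite rot_mult_conj, Cinv_r; [reflexivity|exact rot_neq_0].
Qed.

Lemma Cmod_rot : Cmod (rot M) = 1.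
Proof.
  pose proof (Cmod2_conj (rot M)) as H. rewrite rot_mult_conj in H.
  apply (f_equal fst) in H. cbn in H. pose proof (Cmod_ge_0 (rot M)). nra.
Qed.

Lemma Cmod_rot_pow (n : nat) : Cmod (rot M ^ n)%C = 1.
Proof. rewrite Cmod_pow, Cmod_rot. apply pow1. Qed.

Lemma rot_neq_conj : rot M <> Cconj (rot M).
Proof.
  rewrite rot_eq. intros H. apply (f_equal snd) in H. cbn in H.
  pose proof elliptic_mc_neq_0. pose proof fixpt_im_pos.
  assert (mc M * fixpt_im M <> 0) by (apply Rmult_integral_contrapositive; split; lra). lra.
Qed.

Lemma cayley_denom (w : C) : Cmod w < 1 ->
  (mc M * cayley M w + md M)%C = ((Cconj (rot M) - rot M * w) / (1 - w))%C.
Proof.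
  intros Hw. rewrite rot_conj. unfold cayley, rot. field. exact (one_sub_neq_0 w Hw).
Qed.

Lemma mobius_cayley (w : C) : Cmod w < 1 ->
  mobius M (cayley M w) = cayley M (rot M ^ 2 * w)%C.
Proof.
  intros Hw. unfold mobius. cbn [ma mb mc md]. rewrite cayley_denom by exact Hw.
  assert (Hnum : (ma M * cayley M w + mb M)%C
                 = ((fixpt M * Cconj (rot M) - Cconj (fixpt M) * rot M * w) / (1 - w))%C).
  { rewrite rot_conj. unfold rot.
    rewrite <- (fixpt_fixed (fixpt M)), <- (fixpt_fixed (Cconj (fixpt M)))
      by auto.
    unfold cayley. field. exact (one_sub_neq_0 w Hw). }
  assert (Hw2 : Cmod (rot M ^ 2 * w)%C < 1)
    by (rewrite Cmod_mult, Cmod_rot_pow, Rmult_1_l; exact Hw).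
  rewrite Hnum. unfold cayley. rewrite conj_rot_eq_inv.
  field. repeat split; [exact (one_sub_neq_0 _ Hw2)|exact rot_neq_0|exact (one_sub_neq_0 w Hw)].
Qed.

Lemma cayley_in_H (w : C) : Cmod w < 1 -> in_H (cayley M w).
Proof.
  intros Hw. pose proof fixpt_im_pos as Hy.
  assert (Hw2 : Re w ^ 2 + Im w ^ 2 < 1)
    by (rewrite <- Cmod2_alt; pose proof (Cmod_ge_0 w); nra).
  unfold in_H, cayley, fixpt. destruct w as [p q]. cbn in *.
  assert (Hd : 0 < (1 - p) ^ 2 + q ^ 2) by nra.
  match goal with
  | |- 0 < ?X => replace X with (fixpt_im M * (1 - p ^ 2 - q ^ 2) / ((1 - p) ^ 2 + q ^ 2))
  end.
  - apply Rdiv_lt_0_compat; nra.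
  - field. split; [nra|exact elliptic_mc_neq_0].
Qed.

Lemma cayley_surj (z : C) : in_H z -> exists w, Cmod w < 1 /\ cayley M w = z.
Proof.
  unfold in_H, Im. intros Hz. pose proof fixpt_im_pos as Hy.
  assert (Hden : (z - Cconj (fixpt M))%C <> 0)
    by (intros Heq; apply (f_equal snd) in Heq; cbn in Heq; lra).
  assert (Hdiff : (fixpt M - Cconj (fixpt M))%C <> 0)
    by (intros Heq; apply (f_equal snd) in Heq; cbn in Heq; lra).
  exists ((z - fixpt M) / (z - Cconj (fixpt M)))%C. split.
  - rewrite Cmod_div by exact Hden. apply (Rdiv_lt_1 _ _ (proj1 (Cmod_gt_0 _) Hden)).
    apply Rsqr_incrst_0; [|apply Cmod_ge_0..].
    rewrite !Rsqr_pow2, !Cmod2_alt. unfold Re, Im. cbn. nra.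
  - unfold cayley.
    replace (1 - (z - fixpt M) / (z - Cconj (fixpt M)))%C
      with ((fixpt M - Cconj (fixpt M)) / (z - Cconj (fixpt M)))%C by (field; exact Hden).
    field. split; assumption.
Qed.

Hypothesis Hinf : infinite_order M.

(* [rot M ^ n = 1] implies [Cconj (rot M) ^ n = 1], hence [U_(n-1) = 0], [U_(n-2) = -1] and
   [M ^ n = 1]. *)
Lemma rot_pow_neq_1 (n : nat) : (0 < n)%nat -> (rot M ^ n)%C <> 1.
Proof.
  intros Hn Hpow.
  set (u := fst (cheb2 (mat2_tr M) n)). set (v := snd (cheb2 (mat2_tr M) n)).
  assert (Hroot : forall x y : C, (x + y = mat2_tr M)%C -> (x * y = 1)%C ->
                                  (x * x = mat2_tr M * x - 1)%C)
    by (intros x y Hs Hp; rewrite <- Hs, <- Hp; ring).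
  pose proof rot_add_conj as Hs. pose proof rot_mult_conj as Hp.
  assert (H1 : (u * rot M - v)%C = 1).
  { rewrite <- Hpow. symmetry. apply Cpow_cheb2, (Hroot _ (Cconj (rot M))); assumption. }
  assert (H2 : (u * Cconj (rot M) - v)%C = 1).
  { transitivity (Cconj (rot M) ^ n)%C.
    - symmetry. apply Cpow_cheb2, (Hroot _ (rot M));
        [rewrite Cplus_comm|rewrite Cmult_comm]; assumption.
    - rewrite <- Cpow_conj, Hpow. apply injective_projections; cbn; ring. }
  assert (Hu : u = 0).
  { destruct (Req_dec u 0) as [|Hu]; [assumption|exfalso].
    apply (Cmult_neq_0 u (rot M - Cconj (rot M))).
    - intros Heq. apply Hu. apply (f_equal fst) in Heq. exact Heq.
    - intros Heq. apply rot_neq_conj, Ceq_minus, Heq.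
    - transitivity ((u * rot M - v) - (u * Cconj (rot M) - v))%C; [ring|].
      rewrite H1, H2. ring. }
  assert (Hv : v = -1).
  { apply (f_equal fst) in H1. rewrite Hu in H1. cbn in H1. lra. }
  apply (Hinf n Hn). rewrite mat2_pow_cheb2 by exact HSL. fold u v. rewrite Hu, Hv.
  unfold mat2_id. f_equal; ring.
Qed.

Lemma rot_pow_neq_conj_pow (m p : nat) : (0 < p)%nat -> (rot M ^ m)%C <> (Cconj (rot M) ^ p)%C.
Proof.
  intros Hp Heq. apply (rot_pow_neq_1 (m + p)); [lia|].
  rewrite Cpow_add_r, Heq, <- Cpow_mult_l, Cmult_comm, rot_mult_conj.
  apply Cpow_1_l.
Qed.

End Elliptic.

(** * The Cayley pullback *)

(* Up to a constant factor, [h|_k C] for the Moebius map [C = cayley M] of the unit disk onto H. *)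
Definition cayley_pullback (k : nat) (h : C -> C) (M : mat2) (w : C) : C :=
  ((/ (1 - w)) ^ k * h (cayley M w))%C.

Lemma cayley_pullback_holomorphic (k : nat) (h : C -> C) (M : mat2) :
  in_SL2R M -> elliptic M -> holomorphic_on_H h ->
  forall w, Cmod w < 1 -> ex_derive (cayley_pullback k h M) w.
Proof.
  intros HSL Hell Hh w Hw.
  assert (Hinv : ex_derive (fun y => / (1 - y))%C w).
  { apply ex_derive_Cinv; [|exact (one_sub_neq_0 w Hw)].
    apply (@ex_derive_minus C_AbsRing C_NormedModule); [apply ex_derive_const|].
    now apply ex_derive_C_AbsRing_iff, ex_derive_id. }
  apply ex_derive_Cmult; [now apply ex_derive_Cpow|].
  apply ex_derive_Ccomp; [exact (Hh _ (cayley_in_H M HSL Hell w Hw))|].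
  apply ex_derive_Cmult; [|exact Hinv].
  apply (@ex_derive_minus C_AbsRing C_NormedModule); [apply ex_derive_const|].
  apply ex_derive_Cmult; [apply ex_derive_const|now apply ex_derive_C_AbsRing_iff, ex_derive_id].
Qed.

Lemma cayley_pullback_twisted (k : nat) (h : C -> C) (M : mat2) (zeta : C) :
  in_SL2R M -> elliptic M ->
  (forall z, in_H z -> slash k h M z = (zeta * h z)%C) ->
  forall w, Cmod w < 1 ->
  cayley_pullback k h M (rot M ^ 2 * w)%C = (zeta * Cconj (rot M) ^ k * cayley_pullback k h M w)%C.
Proof.
  intros HSL Hell Hrel w Hw.
  pose proof (Hrel _ (cayley_in_H M HSL Hell w Hw)) as Hs.
  unfold slash in Hs. rewrite pow_n_Cpow, HSL in Hs.
  unfold Rpower in Hs. rewrite ln_1, Rmult_0_r, exp_0, Cmult_1_l in Hs.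
  rewrite cayley_denom, mobius_cayley in Hs by assumption.
  assert (Hw2 : Cmod (rot M ^ 2 * w)%C < 1)
    by (rewrite Cmod_mult, Cmod_rot_pow, Rmult_1_l by assumption; exact Hw).
  pose proof (one_sub_neq_0 w Hw) as N1. pose proof (one_sub_neq_0 _ Hw2) as N2.
  pose proof (rot_neq_0 M HSL Hell) as Nr.
  replace ((Cconj (rot M) - rot M * w) / (1 - w))%C
    with (Cconj (rot M) * (1 - rot M ^ 2 * w) * / (1 - w))%C in Hs
    by (rewrite (conj_rot_eq_inv M HSL Hell); field; auto).
  rewrite !Cpow_mult_l, Cpow_inv in Hs by auto.
  unfold cayley_pullback. rewrite !Cpow_inv by auto.
  set (X := h (cayley M (rot M ^ 2 * w)%C)) in *.
  set (Y := h (cayley M w)) in *.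
  assert (Nc : Cconj (rot M) <> 0).
  { intros Heq. pose proof (rot_mult_conj M HSL Hell) as P. rewrite Heq, Cmult_0_r in P.
    now apply C1_nz. }
  pose proof (Cpow_nz _ k Nc). pose proof (Cpow_nz _ k N1). pose proof (Cpow_nz _ k N2).
  assert (HX : X = (zeta * Y * (Cconj (rot M) ^ k * (1 - rot M ^ 2 * w) ^ k * / (1 - w) ^ k))%C)
    by (rewrite <- Hs; field; auto).
  rewrite HX. field. auto.
Qed.

Theorem lemma4p2 (k : nat) (h : C -> C) (M : mat2) (zeta : C) :
  (0 < k)%nat ->
  holomorphic_on_H h ->
  in_SL2R M -> elliptic M -> infinite_order M ->
  zeta <> RtoC 0 -> root_of_unity zeta ->
  (forall z : C, in_H z -> slash k h M z = Cmult zeta (h z)) ->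
  forall z : C, in_H z -> h z = RtoC 0.
Proof.
  intros Hk Hh HSL Hell Hinf _ [N [HN HzN]] Hrel z Hz.
  rewrite pow_n_Cpow in HzN.
  set (F := cayley_pullback k h M).
  assert (Hinv : forall w, Cmod w < 1 ->
            F (rot M ^ (2 * N) * w)%C = (Cconj (rot M) ^ (k * N) * F w)%C).
  { intros w Hw. rewrite !Cpow_mult_r.
    rewrite (twisted_invariance_pow F _ _ (Cmod_rot_pow M HSL Hell 2)
               (cayley_pullback_twisted k h M zeta HSL Hell Hrel) N w Hw).
    now rewrite !Cpow_mult_l, HzN, Cmult_1_l. }
  assert (HF0 : forall w, Cmod w < 1 -> F w = 0).
  { apply (disk_twisted_invariant_zero F (rot M ^ (2 * N)) (Cconj (rot M) ^ (k * N))
           (cayley_pullback_holomorphic k h M HSL Hell Hh)).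
    - apply Cmod_rot_pow; assumption.
    - intros n Hn. rewrite <- Cpow_mult_r. apply rot_pow_neq_1; [assumption..|nia].
    - intros n. rewrite <- Cpow_mult_r. apply rot_pow_neq_conj_pow; [assumption..|nia].
    - exact Hinv. }
  destruct (cayley_surj M HSL Hell z Hz) as (w & Hw & <-).
  pose proof (HF0 w Hw) as H0. unfold F, cayley_pullback in H0.
  transitivity ((1 - w) ^ k * ((/ (1 - w)) ^ k * h (cayley M w)))%C.
  - rewrite Cmult_assoc, <- Cpow_mult_l, Cinv_r, Cpow_1_l, Cmult_1_l by exact (one_sub_neq_0 w Hw).
    reflexivity.
  - rewrite H0. apply Cmult_0_r.
Qed.
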